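(* Let $(\mathcal{M},d)$ be an NPC space, $\alpha\in[1,2]$, $P\in\mathcal{P}_\alpha(\mathcal{M})$, and let $x^*$ be a minimizer of $F_\alpha$ (assumed to exist). For $x\in\mathcal{M}\setminus\{x^*\}$, if $b_\alpha(x)>0$ then $$ d(x,x^* )^\alpha\le\frac1{b_\alpha(x)}\int_{\mathcal{M}}\left(d(x,y)^\alpha-d(x^*,y)^\alpha\right)dP(y). $$ Consequently, if $B_\alpha:=\inf_{x\in\mathcal{M}\setminus\{x^*\}}b_\alpha(x)>0$, then for all $x\in\mathcal{M}$, $d(x,x^* )^\alpha\le B_\alpha^{-1}\int(d(x,y)^\alpha-d(x^*,y)^\alpha)\,dP(y)$.
   Context: NPC space: a Polish space $(\mathcal{M},d)$ such that for any $x_0,x_1$ there is $y$ with $d(z,y)^2\le\frac12d(z,x_0)^2+\frac12d(z,x_1)^2-\frac14d(x_0,x_1)^2$ for all $z$; such spaces are uniquely geodesic (geodesic: $\gamma:[0,1]\to\mathcal{M}$ with $d(\gamma_s,\gamma_t)=|s-t|d(\gamma_0,\gamma_1)$). $\mathcal{P}_\alpha(\mathcal{M})$ is the set of Borel probability measures $P$ with $\int d(x,y)^\alpha dP(y)<\infty$ for some $x$. $F_\alpha(x)=\int d(x,y)^\alpha dP(y)$. For $x\ne x^*$, $\gamma^x$ is the geodesic with $\gamma^x_0=x^*$, $\gamma^x_1=x$, and $$ b_\alpha(x)=\sup_{t\in(0,1]}\frac{F_\alpha(\gamma^x_t)-\{t^{\alpha/2}+(1-t)^{\alpha/2}\}F_\alpha(x^*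 )}{t^{\alpha/2}d(x,x^* )^\alpha}. $$ *)

From HB Require Import structures.
From mathcomp Require Import all_boot all_order all_algebra.
From mathcomp Require Import all_classical all_reals all_analysis.
Set Implicit Arguments. Unset Strict Implicit. Unset Printing Implicit Defensive.
Import Order.TTheory GRing.Theory Num.Theory.
Local Open Scope classical_set_scope.
Local Open Scope ring_scope.

Section Defs.
Variables (R : realType) (M : Type) (dist : M -> M -> R).

Definition is_metric : Prop :=
  [/\ forall x y, dist x y = 0 <-> x = y,
      forall x y, dist x y = dist y x &
      forall x y z, dist x z <= dist x y + dist y z].

Definition dist_cauchy (u : nat -> M) : Prop :=
  forall e : R, 0 < e -> exists N, forall m n, (N <= m)%N -> (N <= n)%N ->
    dist (u m) (u n) < e.

Definition dist_converges (u : nat -> M) (l : M) : Prop :=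
  forall e : R, 0 < e -> exists N, forall n, (N <= n)%N -> dist (u n) l < e.

Definition dist_complete : Prop :=
  forall u, dist_cauchy u -> exists l, dist_converges u l.

Definition dist_separable : Prop :=
  exists D : nat -> M, forall x (e : R), 0 < e -> exists n, dist x (D n) < e.

Definition polish : Prop := [/\ is_metric, dist_complete & dist_separable].

Definition npc_ineq : Prop :=
  forall x0 x1, exists y, forall z,
    dist z y ^+ 2 <= 2^-1 * dist z x0 ^+ 2 + 2^-1 * dist z x1 ^+ 2
                     - 4^-1 * dist x0 x1 ^+ 2.

Definition NPC_space : Prop := polish /\ npc_ineq.

Definition dist_open (A : set M) : Prop :=
  forall x, A x -> exists e : R, 0 < e /\ [set y | dist x y < e] `<=` A.

(* geodesic gamma : [0,1] -> M (values outside [0,1] irrelevant) *)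
Definition is_geodesic (gamma : R -> M) : Prop :=
  forall s t : R, 0 <= s <= 1 -> 0 <= t <= 1 ->
    dist (gamma s) (gamma t) = `|s - t| * dist (gamma 0) (gamma 1).
End Defs.

Section Meas.
Context {R : realType} {disp : measure_display} {M : measurableType disp}.
Variables (dist : M -> M -> R) (P : probability M R) (alpha : R).

Definition borel_of_dist : Prop :=
  (measurable : set (set M)) = <<s [set A | dist_open dist A] >>.

Definition in_P_alpha : Prop :=
  exists x, (\int[P]_y ((dist x y) `^ alpha)%:E < +oo)%E.

(* F_alpha(x) = int d(x,y)^alpha dP(y)  (finite when P in P_alpha) *)
Definition F_alpha (x : M) : R := fine (\int[P]_y ((dist x y) `^ alpha)%:E).

Definition b_ratio (xs x : M) (gamma : R -> M) (t : R) : R :=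
  (F_alpha (gamma t) - (t `^ (alpha / 2) + (1 - t) `^ (alpha / 2)) * F_alpha xs)
  / (t `^ (alpha / 2) * (dist x xs) `^ alpha).

(* b_alpha(x): supremum over t in (0,1] along the geodesic from xs to x
   (the geodesic is unique in an NPC space; we range over all of them) *)
Definition b_alpha (xs x : M) : \bar R :=
  ereal_sup [set v : \bar R | exists (gamma : R -> M) (t : R),
     [/\ is_geodesic dist gamma, gamma 0 = xs, gamma 1 = x, 0 < t <= 1 &
        v = (b_ratio xs x gamma t)%:E]].

Definition B_alpha (xs : M) : \bar R :=
  ereal_inf [set v : \bar R | exists x, x <> xs /\ v = b_alpha xs x].
End Meas.

From HB Require Import structures.
From mathcomp Require Import all_boot all_order all_algebra.
From mathcomp Require Import all_classical all_reals all_analysis.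
From mathcomp Require Import measurable_realfun ring lra zify.
Import Order.TTheory GRing.Theory Num.Theory.
Local Open Scope ring_scope.

(* In an NPC space the squared distance to a point [y] is 1-convex along a
   geodesic [g] from [xs] to [x]:
     d(y, g t)^2 <= (1 - t) d(y, xs)^2 + t d(y, x)^2 - t (1 - t) d(xs, x)^2.
   This follows from the midpoint inequality by dyadic approximation, using
   that [t |-> d(y, g t)] is Lipschitz.  Raising to the power [alpha / 2 <= 1]
   and integrating in [y] gives
     F_alpha(g t) <= t^(alpha/2) F_alpha(x) + (1 - t)^(alpha/2) F_alpha(xs),
   so every ratio in the supremum defining [b_alpha xs x] is at most
   (F_alpha(x) - F_alpha(xs)) / d(x, xs)^alpha, which rearranges to the claim;
   the bound with [B_alpha] follows since [B_alpha <= b_alpha]. *)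

Lemma metric_ge0 {R : realType} {M : Type} {dist : M -> M -> R} :
  is_metric dist -> forall x y, 0 <= dist x y.
Proof.
case=> h0 hs ht x y.
have := ht x y x; rewrite (proj2 (h0 x x) erefl) (hs y x); lra.
Qed.

Section DyadicDensity.
Context {R : realType}.
Implicit Types (f : R -> R) (n k : nat).

Lemma dyadic_in_unit {n k} : (k <= 2 ^ n)%N -> 0 <= (k%:R / 2 ^+ n : R) <= 1.
Proof.
move=> hk; have p2n : 0 < 2 ^+ n :> R by apply: exprn_gt0.
apply/andP; split; first by apply: divr_ge0 => //; apply: ltW.
by rewrite ler_pdivrMr // mul1r -natrX ler_nat.
Qed.

Lemma midpoint_convex_dyadic_le0 {f} :
  f 0 = 0 -> f 1 = 0 ->
  (forall s u, 0 <= s <= 1 -> 0 <= u <= 1 ->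
     f ((s + u) / 2) <= 2^-1 * f s + 2^-1 * f u) ->
  forall n k, (k <= 2 ^ n)%N -> f (k%:R / 2 ^+ n) <= 0.
Proof.
move=> f0 f1 fmid; elim=> [|n IH] k hk.
  by rewrite expr0 divr1; case: k hk => [|[|//]] _; rewrite ?f0 ?f1.
have p2n : 2 ^+ n != 0 :> R by rewrite gt_eqF ?exprn_gt0.
rewrite -(odd_double_half k) in hk *; set j := k./2 in hk *.
rewrite expnS -muln2 in hk.
case: (odd k) hk => /= hk; last first.
  have -> : (0 + j.*2)%:R / 2 ^+ n.+1 = j%:R / 2 ^+ n :> R.
    by rewrite add0n -mul2n natrM exprS; field.
  by apply: IH; lia.
have hj : (j.+1 <= 2 ^ n)%N by lia.
have hj' : (j <= 2 ^ n)%N by lia.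
have -> : (1 + j.*2)%:R / 2 ^+ n.+1 = (j%:R / 2 ^+ n + j.+1%:R / 2 ^+ n) / 2 :> R.
  by rewrite -mul2n natrD natrM -(addn1 j) natrD exprS; field.
have := fmid _ _ (dyadic_in_unit hj') (dyadic_in_unit hj).
have := IH _ hj'; have := IH _ hj; lra.
Qed.

(* One-sided Lipschitz control lets the sign of [f] at the dyadic point just
   below [t] propagate to [t]. *)
Lemma dyadic_le0_le0 {f} {L t : R} :
  0 <= L -> 0 <= t <= 1 ->
  (forall n k, (k <= 2 ^ n)%N -> f (k%:R / 2 ^+ n) <= 0) ->
  (forall s, 0 <= s <= t -> f t <= f s + L * (t - s)) ->
  f t <= 0.
Proof.
move=> L0 /andP[t0 t1] fdy flip; rewrite leNgt; apply/negP => ft.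
have p2n n : 0 < 2 ^+ n :> R by apply: exprn_gt0.
set N := Num.truncn (L / f t).
have hLN : L < f t * 2 ^+ N.
  rewrite mulrC -ltr_pdivrMr //.
  have /andP[_ hN] := truncn_itv (divr_ge0 L0 (ltW ft)).
  by rewrite (lt_le_trans hN) // -natrX ler_nat ltn_expl.
set k := Num.truncn (t * 2 ^+ N).
have /andP[kt tk] := truncn_itv (mulr_ge0 t0 (ltW (p2n N))).
have kle : (k <= 2 ^ N)%N.
  by rewrite -(ler_nat R) natrX (le_trans kt) // ler_piMl // ltW.
have sle : k%:R / 2 ^+ N <= t by rewrite ler_pdivrMr.
have tsle : t - k%:R / 2 ^+ N <= 1 / 2 ^+ N.
  rewrite -(ler_pM2r (p2n N)) mulrBl divfK ?gt_eqF // div1r mulVf ?gt_eqF //.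
  by rewrite -natr1 in tk; lra.
have /andP[s0 _] := dyadic_in_unit kle.
have hl := flip _ (introT andP (conj s0 sle)).
have := fdy N k kle.
have : L * (t - k%:R / 2 ^+ N) <= L * (1 / 2 ^+ N) by apply: ler_wpM2l.
have : L * (1 / 2 ^+ N) < f t by rewrite mul1r ltr_pdivrMr.
lra.
Qed.

End DyadicDensity.

Section NPCGeodesic.
Context {R : realType} {M : Type} {dist : M -> M -> R} {g : R -> M} (y : M).
Hypotheses (hmetric : is_metric dist) (hnpc : npc_ineq dist)
  (hgeod : is_geodesic dist g).

Let D := dist (g 0) (g 1).
Let a := dist y (g 0).
Let b := dist y (g 1).

Let q (t : R) := (1 - t) * a ^+ 2 + t * b ^+ 2 - t * (1 - t) * D ^+ 2.
Let psi (t : R) := dist y (g t) ^+ 2 - q t.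

(* Applied at the midpoint [m] of [g s] and [g u], the NPC inequality with
   [z := g m] forces the NPC midpoint to be [g m]; applying it again with
   [z := y] gives midpoint convexity of [psi]. *)
Lemma npc_psi_midpoint_convex s u : 0 <= s <= 1 -> 0 <= u <= 1 ->
  psi ((s + u) / 2) <= 2^-1 * psi s + 2^-1 * psi u.
Proof.
move=> hs1 hu1; set m := (s + u) / 2.
have hm1 : 0 <= m <= 1 by rewrite /m; apply/andP; split; lra.
have [y0 Hy0] := hnpc (g s) (g u).
have e1 := hgeod m s hm1 hs1; have e2 := hgeod m u hm1 hu1.
have e3 := hgeod s u hs1 hu1.
have : dist (g m) y0 ^+ 2 == 0.
  rewrite eq_le sqr_ge0 andbT.
  have := Hy0 (g m); rewrite e1 e2 e3 !exprMn !real_normK ?num_real //.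
  suff -> : 2^-1 * ((m - s) ^+ 2 * D ^+ 2) + 2^-1 * ((m - u) ^+ 2 * D ^+ 2) -
            4^-1 * ((s - u) ^+ 2 * D ^+ 2) = 0 by [].
  by rewrite /m; field.
rewrite sqrf_eq0 => /eqP; case: hmetric => h0 _ _ /h0 em.
have := Hy0 y; rewrite -em e3 -/D exprMn real_normK ?num_real // /psi.
have -> : q m = 2^-1 * q s + 2^-1 * q u - 4^-1 * ((s - u) ^+ 2 * D ^+ 2).
  by rewrite /q /m; field.
lra.
Qed.

Let dist_ge0 := metric_ge0 hmetric.

Lemma geodesic_dist_le t : 0 <= t <= 1 -> dist y (g t) <= a + D.
Proof.
move=> ht; have h01 : 0 <= (0 : R) <= 1 by rewrite lexx ler01.
have [_ _ tri] := hmetric; have := tri y (g 0) (g t).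
rewrite (hgeod 0 t h01 ht) -/D sub0r normrN ger0_norm; last by case/andP: ht.
have : t * D <= D by rewrite ler_piMl ?dist_ge0 //; case/andP: ht.
rewrite -/a; lra.
Qed.

Let L := 2 * D * (a + D) + `|b ^+ 2 - a ^+ 2 - D ^+ 2|.

Lemma npc_psi_lipschitz_left s t : 0 <= s <= t -> t <= 1 ->
  psi t <= psi s + L * (t - s).
Proof.
move=> /andP[s0 st] t1.
have hs1 : 0 <= s <= 1 by apply/andP; split; lra.
have ht1 : 0 <= t <= 1 by apply/andP; split; lra.
have D0 : 0 <= D := dist_ge0 _ _.
have a0 : 0 <= a := dist_ge0 _ _.
have hst : dist (g s) (g t) = (t - s) * D.
  by rewrite (hgeod s t hs1 ht1) -/D distrC ger0_norm ?subr_ge0.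
have hsq : dist y (g t) ^+ 2 - dist y (g s) ^+ 2 <= (t - s) * D * (2 * (a + D)).
  have [_ _ tri3] := hmetric; have := tri3 y (g s) (g t); rewrite hst => tri.
  have bt := geodesic_dist_le t ht1; have bs := geodesic_dist_le s hs1.
  have dt0 := dist_ge0 y (g t); have ds0 := dist_ge0 y (g s).
  move: tri bt bs dt0 ds0; move: (dist y (g t)) (dist y (g s)) => dt ds.
  have tsD : 0 <= (t - s) * D by apply: mulr_ge0; lra.
  nra.
have hq : q s - q t <= (t - s) * `|b ^+ 2 - a ^+ 2 - D ^+ 2|.
  have -> : q s - q t =
      - ((t - s) * (b ^+ 2 - a ^+ 2 - D ^+ 2) + (t ^+ 2 - s ^+ 2) * D ^+ 2).
    by rewrite /q; ring.
  have hc := ler_norm (- (b ^+ 2 - a ^+ 2 - D ^+ 2)); rewrite normrN in hc.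
  have hts : s ^+ 2 <= t ^+ 2 by rewrite ler_sqr ?nnegrE //; lra.
  have := sqr_ge0 D; move: (D ^+ 2) (b ^+ 2 - a ^+ 2 - D ^+ 2) hc => D2 c hc.
  nra.
rewrite /psi /L; nra.
Qed.

Lemma npc_geodesic_comparison t : 0 <= t <= 1 ->
  dist y (g t) ^+ 2 <= (1 - t) * dist y (g 0) ^+ 2 + t * dist y (g 1) ^+ 2
     - t * (1 - t) * dist (g 0) (g 1) ^+ 2.
Proof.
move=> ht; rewrite -/a -/b -/D -/(q t) -subr_le0 -/(psi t).
have L0 : 0 <= L.
  by rewrite /L addr_ge0 // !mulr_ge0 ?addr_ge0 ?dist_ge0.
apply: (@dyadic_le0_le0 R psi L t L0 ht); last first.
  by move=> s hs; apply: npc_psi_lipschitz_left => //; case/andP: ht.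
apply: midpoint_convex_dyadic_le0; last exact: npc_psi_midpoint_convex.
- by rewrite /psi /q /a; ring.
- by rewrite /psi /q /b; ring.
Qed.
End NPCGeodesic.

Section PowR.
Context {R : realType}.
Implicit Types (u v z p : R).

(* Concavity: [(u + v) `^ p] splits along the weights [u / (u + v)] and
   [v / (u + v)], and [x <= x `^ p] on [[0, 1]]. *)
Lemma powR_subadd u v p : 0 <= u -> 0 <= v -> 0 < p <= 1 ->
  (u + v) `^ p <= u `^ p + v `^ p.
Proof.
move=> u0 v0 /andP[p0 p1].
have [w0|wn0] := eqVneq (u + v) 0.
  have [-> ->] : u = 0 /\ v = 0 by split; lra.
  by rewrite addr0 powR0 ?gt_eqF // addr0.
have w0 : 0 < u + v by rewrite lt_def wn0 addr_ge0.
have weighted z : 0 <= z <= u + v -> (u + v) `^ p * (z / (u + v)) <= z `^ p.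
  move=> /andP[z0 zw].
  have -> : z `^ p = (u + v) `^ p * (z / (u + v)) `^ p.
    by rewrite -powRM ?(ltW w0) ?divr_ge0 ?(ltW w0) // mulrCA divff ?mulr1 // gt_eqF.
  rewrite ler_wpM2l ?powR_ge0 //.
  have [->|zn0] := eqVneq z 0; first by rewrite mul0r powR_ge0.
  apply: ger1_powR => //; apply/andP; split; last by rewrite ler_pdivrMr // mul1r.
  by rewrite divr_gt0 // lt_def zn0.
have := weighted u; rewrite u0 lerDl v0 => /(_ isT).
have := weighted v; rewrite v0 lerDr u0 => /(_ isT).
have : (u + v) `^ p * (u / (u + v)) + (u + v) `^ p * (v / (u + v)) = (u + v) `^ p.
  by rewrite -mulrDr -mulrDl divff ?gt_eqF // mulr1.
lra.
Qed.

Lemma powR_sqr z p : 0 <= z -> z `^ p = (z ^+ 2) `^ (p / 2).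
Proof.
by move=> z0; rewrite -(powR_mulrn 2 z0) -powRrM mulrC divfK.
Qed.

Lemma powR_add_le a b p : 0 <= a -> 0 <= b -> 0 <= p ->
  (a + b) `^ p <= 2 `^ p * (a `^ p + b `^ p).
Proof.
move=> a0 b0 p0.
wlog ab : a b a0 b0 / a <= b.
  move=> hwlog; have [|/ltW] := leP a b; first exact: hwlog.
  by move/(hwlog b a b0 a0); rewrite addrC [b `^ p + _]addrC.
apply: (le_trans (y := (2 * b) `^ p)).
  by rewrite ge0_ler_powR ?nnegrE ?addr_ge0 ?mulr_ge0 //; lra.
rewrite powRM // ler_wpM2l ?powR_ge0 // lerDr powR_ge0 //.
Qed.
End PowR.

(* Drop the negative term of the comparison inequality, raise it to the power
   [alpha / 2 <= 1] and split the sum by subadditivity. *)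
Lemma npc_geodesic_powR_le {R : realType} {M : Type} {dist : M -> M -> R}
    {g : R -> M} y t alpha :
  is_metric dist -> npc_ineq dist -> is_geodesic dist g -> 0 <= t <= 1 ->
  1 <= alpha <= 2 ->
  dist (g t) y `^ alpha <= t `^ (alpha / 2) * dist (g 1) y `^ alpha
                         + (1 - t) `^ (alpha / 2) * dist (g 0) y `^ alpha.
Proof.
move=> hm hnpc hg ht ha.
have d0 := metric_ge0 hm.
have [_ hsym _] := hm.
have p01 : 0 < alpha / 2 <= 1 by apply/andP; split; lra.
have /andP[t0 t1] := ht.
rewrite !(hsym _ y) !(@powR_sqr _ _ alpha (d0 _ _)).
have le1 : dist y (g t) ^+ 2 <= (1 - t) * dist y (g 0) ^+ 2 + t * dist y (g 1) ^+ 2.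
  have := npc_geodesic_comparison y hm hnpc hg t ht.
  have : 0 <= t * (1 - t) * dist (g 0) (g 1) ^+ 2.
    by rewrite mulr_ge0 ?sqr_ge0 // mulr_ge0 //; lra.
  lra.
have u0 : 0 <= (1 - t) * dist y (g 0) ^+ 2 by rewrite mulr_ge0 ?sqr_ge0 //; lra.
have v0 : 0 <= t * dist y (g 1) ^+ 2 by rewrite mulr_ge0 ?sqr_ge0.
apply: (le_trans (ge0_ler_powR (ltW (proj1 (andP p01))) _ _ le1)).
- by rewrite nnegrE sqr_ge0.
- by rewrite nnegrE addr_ge0.
apply: (le_trans (powR_subadd _ _ _ u0 v0 p01)).
rewrite !powRM ?sqr_ge0 //; lra.
Qed.

Lemma measurable_dist {R : realType} {disp : measure_display}
    {M : measurableType disp} {dist : M -> M -> R} :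
  is_metric dist -> borel_of_dist dist -> forall x, measurable_fun setT (dist x).
Proof.
move=> [_ hsym htri] hborel x.
apply: (measurability _ (RGenOInfty.measurableE R)) => //.
move=> _ [_ [a ->] <-]; rewrite setTI hborel; apply: sub_sigma_algebra.
move=> y /=; rewrite in_itv /= andbT => hy.
exists (dist x y - a); split; first by rewrite subr_gt0.
move=> z /= hz; rewrite in_itv /= andbT.
have := htri x z y; rewrite (hsym z y); lra.
Qed.

Section Moments.
Context {R : realType} {disp : measure_display} {M : measurableType disp}.
Context {dist : M -> M -> R} {P : probability M R} {alpha : R}.
Hypotheses (hmetric : is_metric dist) (hborel : borel_of_dist dist)
  (halpha : 0 <= alpha) (hP : in_P_alpha dist P alpha).

Let F := F_alpha dist P alpha.

(* A single finite moment gives all of them: [d(z,y) `^ alpha] is dominated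
   by [2 `^ alpha * (d(z,x0) `^ alpha + d(x0,y) `^ alpha)]. *)
Lemma integrable_dist_powR z :
  P.-integrable setT (fun y => (dist z y `^ alpha)%:E).
Proof.
have d0 := metric_ge0 hmetric; have [_ _ htri] := hmetric.
have [x0 hx0] := hP.
have mdist x : measurable_fun setT (fun y => dist x y `^ alpha).
  exact: measurableT_comp (measurable_powR alpha) (measurable_dist hmetric hborel x).
have ix0 : P.-integrable setT (fun y => (dist x0 y `^ alpha)%:E).
  apply/integrableP; split; first exact/measurable_EFinP.
  rewrite (eq_integral (fun y => (dist x0 y `^ alpha)%:E)) //.
  by move=> y _; rewrite gee0_abs // lee_fin powR_ge0.
pose bound := fun y => ((2 `^ alpha)%:E *
  ((EFin \o cst (dist z x0 `^ alpha)%R) \+ (fun y => (dist x0 y `^ alpha)%:E)) y)%E.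
have ibound : P.-integrable setT bound.
  apply: integrableZl => //; apply: integrableD => //.
  exact: finite_measure_integrable_cst.
apply: (le_integrable _ _ _ ibound) => //; first exact/measurable_EFinP.
move=> y _; rewrite /bound /= lee_fin !ger0_norm ?powR_ge0 //; last first.
  by rewrite mulr_ge0 ?addr_ge0 ?powR_ge0.
apply: (le_trans _ (powR_add_le _ _ _ (d0 z x0) (d0 x0 y) halpha)).
by rewrite ge0_ler_powR ?nnegrE ?addr_ge0 ?d0.
Qed.

Lemma integral_dist_powR z : (\int[P]_y (dist z y `^ alpha)%:E)%E = (F z)%:E.
Proof. by rewrite /F /F_alpha fineK // integrable_fin_num ?integrable_dist_powR. Qed.

Lemma integral_dist_powR_sub x z :
  (\int[P]_y ((dist x y `^ alpha - dist z y `^ alpha)%:E))%E = (F x - F z)%:E.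
Proof.
under eq_integral do rewrite EFinB.
by rewrite integralB_EFin ?integrable_dist_powR // !integral_dist_powR EFinB.
Qed.
End Moments.

Section ExcessBound.
Context {R : realType} {disp : measure_display} {M : measurableType disp}.
Context {dist : M -> M -> R} {P : probability M R} {alpha : R}.
Hypotheses (hmetric : is_metric dist) (hnpc : npc_ineq dist)
  (hborel : borel_of_dist dist) (halpha : 1 <= alpha <= 2)
  (hP : in_P_alpha dist P alpha).

Let F := F_alpha dist P alpha.
Let halpha0 : 0 <= alpha. Proof. by case/andP: halpha => h _; lra. Qed.

Lemma dist_powR_gt0 {x xs : M} : x <> xs -> 0 < dist x xs `^ alpha.
Proof.
have [h0 _ _] := hmetric.
by move=> hx; rewrite powR_gt0 // lt_def metric_ge0 // andbT; apply/eqP => /h0.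
Qed.

Lemma F_alpha_geodesic_le {g : R -> M} {t : R} :
  is_geodesic dist g -> 0 <= t <= 1 ->
  F (g t) <= t `^ (alpha / 2) * F (g 1) + (1 - t) `^ (alpha / 2) * F (g 0).
Proof.
move=> hg ht; have ig := integrable_dist_powR hmetric hborel halpha0 hP.
rewrite -lee_fin EFinD !EFinM -!(integral_dist_powR hmetric hborel halpha0 hP).
rewrite -!integralZl // -integralD ?integrableZl //.
apply: le_integral; rewrite ?integrableD ?integrableZl // => y _.
by rewrite -!EFinM -EFinD lee_fin (npc_geodesic_powR_le y t alpha hmetric hnpc hg ht halpha).
Qed.

(* Every ratio in the supremum defining [b_alpha] is bounded by its value at
   [t = 1], by convexity of [F] along the geodesic. *)
Lemma b_alpha_le_excess xs x : x <> xs ->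
  (b_alpha dist P alpha xs x <= ((F x - F xs) / dist x xs `^ alpha)%:E)%E.
Proof.
move=> hx; apply: ge_ereal_sup => _ [g [t [hg g0 g1 /andP[t0 t1] ->]]].
have dpos := dist_powR_gt0 hx.
have tpos : 0 < t `^ (alpha / 2) by rewrite powR_gt0.
have ht : 0 <= t <= 1 by rewrite ltW.
have := F_alpha_geodesic_le hg ht; rewrite g0 g1 => hF.
rewrite lee_fin /b_ratio -/F ler_pdivrMr ?mulr_gt0 //.
have -> : (F x - F xs) / dist x xs `^ alpha * (t `^ (alpha / 2) * dist x xs `^ alpha)
    = t `^ (alpha / 2) * (F x - F xs) by field; rewrite gt_eqF.
lra.
Qed.

Lemma dist_powR_le_excess_div xs x r : x <> xs -> 0 < r ->
  (r%:E <= ((F x - F xs) / dist x xs `^ alpha)%:E)%E ->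
  ((dist x xs `^ alpha)%:E <=
     (r^-1)%:E * \int[P]_y ((dist x y `^ alpha - dist xs y `^ alpha)%:E))%E.
Proof.
move=> hx r0; rewrite (integral_dist_powR_sub hmetric hborel halpha0 hP).
rewrite -EFinM !lee_fin => hr.
rewrite -(ler_pM2l r0) mulrA mulfV ?gt_eqF // mul1r.
have dpos := dist_powR_gt0 hx.
by rewrite ler_pdivlMr // mulrC in hr.
Qed.
End ExcessBound.

Theorem proposition4p2 (R : realType) (disp : measure_display)
  (M : measurableType disp) (dist : M -> M -> R)
  (P : probability M R) (alpha : R) (xs : M) :
  NPC_space dist ->
  borel_of_dist dist ->
  1 <= alpha <= 2 ->
  in_P_alpha dist P alpha ->
  (forall z, F_alpha dist P alpha xs <= F_alpha dist P alpha z) ->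
  (forall x, x <> xs -> (0 < b_alpha dist P alpha xs x)%E ->
     (((dist x xs) `^ alpha)%:E <=
        ((fine (b_alpha dist P alpha xs x))^-1)%:E *
        \int[P]_y ((dist x y) `^ alpha - (dist xs y) `^ alpha)%:E)%E)
  /\
  ((0 < B_alpha dist P alpha xs)%E ->
   forall x, (((dist x xs) `^ alpha)%:E <=
        ((fine (B_alpha dist P alpha xs))^-1)%:E *
        \int[P]_y ((dist x y) `^ alpha - (dist xs y) `^ alpha)%:E)%E).
Proof.
move=> [[hmetric _ _] hnpc] hborel halpha hP _.
have le_b := b_alpha_le_excess hmetric hnpc hborel halpha hP.
have conclude := dist_powR_le_excess_div hmetric hborel halpha hP.
split.
  move=> x hx; have := le_b xs x hx.
  by case: (b_alpha _ _ _ xs x) => [r| |] //= hr; rewrite lte_fin => r0; apply: conclude.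
move=> hB x.
have [->|/eqP hx] := eqVneq x xs.
  have [h0 _ _] := hmetric.
  rewrite (integral_dist_powR_sub hmetric hborel _ hP) ?subrr ?mule0; last by lra.
  by rewrite (proj2 (h0 xs xs) erefl) powR0 // gt_eqF //; lra.
have le_B : (B_alpha dist P alpha xs <= b_alpha dist P alpha xs x)%E.
  by apply: ereal_inf_lbound; exists x.
move: hB (le_trans le_B (le_b xs x hx)).
by case: (B_alpha _ _ _ xs) => [r| |] //= hr; rewrite lte_fin in hr; apply: conclude.
Qed.
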